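(* Let $m\ge 2$ and $n\ge 1$ be integers. Then either $\mu(n+m,m)=\mu(n+m,m-1)$, or $$\mu(n+m,m)\ge \mu(n,m)+\nu(m,m)=\mu(n,m)+\lceil m/2\rceil.$$
   Context: Let $\mathbb F_2=\{0,1\}$ be the field with two elements. For $u\in\mathbb F_2^n$, $|u|$ denotes the Hamming weight of $u$. A wiring on $n$ vertices is a matrix $W=(w_{i,j})\in M(n,n;\mathbb F_2)$ with $w_{i,i}=1$ for all $i$. The degree of vertex $j$ is the number of $1$s in the $j$th column of $W$, and $\deg(W)$ is the maximum degree over all vertices. For $c\in\mathbb F_2^n$, $M(W,c)=\max\{|Wx+c| : x\in\mathbb F_2^n\}$. For $n,m\ge1$, $A(n,m)$ is the set of wirings on $n$ vertices with $\deg(W)\le m$. Define $\mu(n,m)=\min\{M(W,0): W\in A(n,m)\}$ and $\nu(n,m)=\min\{M(W,c): W\in A(n,m),\ c\in\mathbb F_2^n\}$. *)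

From HB Require Import structures.
From mathcomp Require Import all_boot all_order all_algebra.
Set Implicit Arguments. Unset Strict Implicit. Unset Printing Implicit Defensive.
Import GRing.Theory.

Local Open Scope ring_scope.

Definition hweight (n : nat) (u : 'cV['F_2]_n) : nat :=
  #|[set i : 'I_n | u i ord0 != 0]|.

Definition is_wiring (n : nat) (W : 'M['F_2]_n) : bool :=
  [forall i : 'I_n, W i i == 1].

Definition vdeg (n : nat) (W : 'M['F_2]_n) (j : 'I_n) : nat :=
  #|[set i : 'I_n | W i j != 0]|.

Definition wdeg (n : nat) (W : 'M['F_2]_n) : nat :=
  (\max_(j : 'I_n) vdeg W j)%N.

Definition Mval (n : nat) (W : 'M['F_2]_n) (c : 'cV['F_2]_n) : nat :=
  (\max_(x : 'cV['F_2]_n) hweight (W *m x + c))%N.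

Definition inA (n m : nat) (W : 'M['F_2]_n) : bool :=
  is_wiring W && (wdeg W <= m)%N.

(* mu(n,m) = min { M(W,0) : W in A(n,m) }.  The default value n of the
   iterated min is harmless: every M(W,c) <= n, and A(n,m) is nonempty
   (it contains the identity) for m >= 1. *)
Definition mu (n m : nat) : nat :=
  \big[minn/n]_(W : 'M['F_2]_n | inA m W) Mval W 0.

Definition nu (n m : nat) : nat :=
  \big[minn/n]_(Wc : 'M['F_2]_n * 'cV['F_2]_n | inA m Wc.1) Mval Wc.1 Wc.2.

From HB Require Import structures.
From mathcomp Require Import all_boot all_order all_algebra zify.
Set Implicit Arguments. Unset Strict Implicit. Unset Printing Implicit Defensive.
Import GRing.Theory.
Local Open Scope ring_scope.

(* Averaging: when W has unit diagonal, each coordinate of W x + c is nonzero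
   for exactly half of the x, so the mean weight of W x + c is m/2 and hence
   M(W,c) >= ceil(m/2); the all-ones wiring with a suitable shift attains this,
   so nu(m,m) = ceil(m/2).  If mu(n+m,m) < mu(n+m,m-1), an optimal W for
   mu(n+m,m) has a vertex j of degree exactly m.  Outside the support S of
   column j the principal submatrix W' of W lies in A(n,m); extending an
   optimal input y of W' by zero and adding b e_j leaves the coordinates
   outside S unchanged, while a good choice of b makes at least ceil(m/2)
   coordinates in S nonzero. *)

HB.instance Definition _ := SemiGroup.isComLaw.Build nat minn minnA minnC.

Section BigMin.

Variables (I : finType) (F : I -> nat) (d : nat).

Lemma bigmin_le (P : pred I) i0 : P i0 -> (\big[minn/d]_(i | P i) F i <= F i0)%N.
Proof. by move=> Pi0; rewrite (bigD1 i0) //= geq_minl. Qed.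

Lemma bigmin_le_idx (P : pred I) : (\big[minn/d]_(i | P i) F i <= d)%N.
Proof. by elim/big_rec: _ => // i x _; apply: leq_trans (geq_minr _ _). Qed.

Lemma bigmin_sub_le (P Q : pred I) : (forall i, P i -> Q i) ->
  (\big[minn/d]_(i | Q i) F i <= \big[minn/d]_(i | P i) F i)%N.
Proof. move=> PQ; exact: (@sub_le_big _ _ geq leqnn geq_minl d I _ P Q F PQ). Qed.

Lemma bigmin_geq (P : pred I) k : (k <= d)%N -> (forall i, P i -> k <= F i)%N ->
  (k <= \big[minn/d]_(i | P i) F i)%N.
Proof. by move=> kd kF; elim/big_ind: _ => // x y; rewrite leq_min => -> ->. Qed.

End BigMin.

Lemma F2_cases (a : 'F_2) : a = 0 \/ a = 1.
Proof. by case: a => [[|[|k]]] //= lt_k2; [left | right]; apply/val_inj. Qed.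

Lemma F2_addxx (a : 'F_2) : a + a = 0.
Proof. by case: (F2_cases a) => ->; apply/val_inj. Qed.

Lemma F2_addr1_neq0 (a : 'F_2) : (a + 1 != 0) = (a == 0).
Proof. by case: (F2_cases a) => ->. Qed.

Lemma card_set_sum (T : finType) (P : pred T) : #|[set x | P x]| = (\sum_x P x)%N.
Proof. by rewrite -sum1dep_card big_mkcond. Qed.

Lemma hweightE n (u : 'cV['F_2]_n) : hweight u = (\sum_i (u i ord0 != 0%R))%N.
Proof. exact: card_set_sum. Qed.

Lemma sum_ord_ltn m k : (\sum_(i < m) (i < k : nat) = minn k m)%N.
Proof.
elim: m => [|m IHm]; first by rewrite big_ord0; lia.
by rewrite big_ord_recr /= IHm; case: ltnP; lia.
Qed.

Lemma sum_ord_geq m k : (\sum_(i < m) (k <= i : nat) = m - k)%N.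
Proof.
elim: m => [|m IHm]; first by rewrite big_ord0.
by rewrite big_ord_recr /= IHm; case: leqP; lia.
Qed.

Lemma card_coord_neq0_half m (W : 'M['F_2]_m) (c : 'cV['F_2]_m) i : W i i = 1 ->
  (#|[set x | (W *m x + c)%R i ord0 != 0%R]|.*2 = 2 ^ m)%N.
Proof.
move=> Wii; set A := [set x | _].
pose flip (x : 'cV['F_2]_m) := x + delta_mx i ord0.
have flipK : involutive flip.
  move=> x; rewrite /flip -addrA [delta_mx _ _ + _](_ : _ = 0) ?addr0 //.
  by apply/matrixP => k l; rewrite !mxE F2_addxx.
have flipE x : (W *m flip x + c) i ord0 = (W *m x + c) i ord0 + 1.
  by rewrite /flip mulmxDr -colE addrAC !mxE Wii.
have flipA : flip @: A = ~: A.
  rewrite (can_imset_pre A flipK); apply/setP => x.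
  by rewrite !inE flipE F2_addr1_neq0 negbK.
have := cardsC A; rewrite -flipA card_imset; last exact: inv_inj.
by rewrite card_mx card_Fp // muln1 addnn.
Qed.

Lemma sum_hweight_wiring m (W : 'M['F_2]_m) (c : 'cV['F_2]_m) : is_wiring W ->
  ((\sum_x hweight (W *m x + c)).*2 = m * 2 ^ m)%N.
Proof.
move=> /forallP Wdiag; rewrite -mul2n big_distrr /=.
under eq_bigr => x _ do rewrite hweightE big_distrr /=.
rewrite exchange_big /=.
under eq_bigr => i _ do rewrite -big_distrr /= -card_set_sum mul2n
  (card_coord_neq0_half c (eqP (Wdiag i))).
by rewrite sum_nat_const card_ord.
Qed.

Lemma Mval_ge_uphalf m (W : 'M['F_2]_m) c : is_wiring W -> (uphalf m <= Mval W c)%N.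
Proof.
move=> Wwiring.
have sum_le : (\sum_x hweight (W *m x + c) <= Mval W c * 2 ^ m)%N.
  apply: (@leq_trans (\sum_(x : 'cV['F_2]_m) Mval W c)).
    by apply: leq_sum => x _; apply: leq_bigmax.
  by rewrite sum_nat_const card_mx card_Fp // muln1 mulnC.
have : (m * 2 ^ m <= (Mval W c).*2 * 2 ^ m)%N.
  by rewrite -(sum_hweight_wiring c Wwiring) -doubleMl leq_double.
by rewrite leq_pmul2r ?expn_gt0 // leq_uphalf_double.
Qed.

Lemma nu_mm m : nu m m = uphalf m.
Proof.
have uphalfC : (m - uphalf m <= uphalf m)%N by have := uphalfK m; lia.
have uphalf_le : (uphalf m <= m)%N by rewrite leq_uphalf_double -addnn leq_addr.
apply/eqP; rewrite eqn_leq; apply/andP; split; last first.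
  by apply: bigmin_geq => // Wc /andP[Wwiring _]; apply: Mval_ge_uphalf.
pose J : 'M['F_2]_m := const_mx 1.
pose c : 'cV['F_2]_m := \col_i (if (i < uphalf m)%N then 1 else 0).
have J_inA : inA m J.
  apply/andP; split; first by apply/forallP => i; rewrite mxE.
  by apply/bigmax_leqP => j _; rewrite -[X in (_ <= X)%N]card_ord max_card.
apply: leq_trans (@bigmin_le _ _ _ _ (J, c) J_inA) _.
apply/bigmax_leqP => x _ /=.
have Jx i : (J *m x) i ord0 = \sum_k x k ord0.
  by rewrite mxE; apply: eq_bigr => k _; rewrite mxE mul1r.
rewrite hweightE; case: (F2_cases (\sum_k x k ord0)) => sumx.
  under eq_bigr => i _ do rewrite mxE Jx mxE sumx add0r /=.
  apply: leq_trans (geq_minl (uphalf m) m).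
  by rewrite -sum_ord_ltn leq_sum // => i _; case: ifP.
under eq_bigr => i _ do rewrite mxE Jx mxE sumx /=.
by apply: leq_trans uphalfC; rewrite -sum_ord_geq leq_sum // => i _; case: ltnP.
Qed.

Lemma exists_shift_uphalf (T : finType) (S : {set T}) (g : T -> 'F_2) :
  exists b : 'F_2, (uphalf #|S| <= #|[set i in S | (g i + b != 0)%R]|)%N.
Proof.
pose A0 := [set i in S | g i + 0 != 0]; pose A1 := [set i in S | g i + 1 != 0].
have card_parts : (#|A0| + #|A1| = #|S|)%N.
  rewrite -(cardsID [set i | g i != 0] S); congr (_ + _); apply: eq_card => i.
    by rewrite !inE addr0 andbC.
  by rewrite !inE F2_addr1_neq0 negbK andbC.
have [le0 | lt0] := leqP (uphalf #|S|) #|A0|; first by exists 0.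
by exists 1; rewrite -/A1 leq_uphalf_double; move: lt0; rewrite gtn_uphalf_double; lia.
Qed.

Section PrincipalSubmatrix.

Variables (n N : nat) (f : 'I_n -> 'I_N).

Lemma inA_mxsub m (W : 'M['F_2]_N) : injective f -> inA m W -> inA m (mxsub f f W).
Proof.
move=> f_inj /andP[/forallP Wdiag Wdeg]; apply/andP; split.
  by apply/forallP => a; rewrite mxE Wdiag.
apply/bigmax_leqP => b _; apply: leq_trans Wdeg; apply: leq_trans (leq_bigmax (f b)).
rewrite /vdeg -(card_imset _ f_inj); apply: subset_leq_card; apply/subsetP => i.
by case/imsetP => a; rewrite !inE mxE => Wab ->.
Qed.

Definition zero_ext (y : 'cV['F_2]_n) : 'cV['F_2]_N :=
  \matrix_(i, a) (f a == i)%:R *m y.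

Lemma mulmx_zero_ext W y a :
  (W *m zero_ext y) (f a) ord0 = (mxsub f f W *m y) a ord0.
Proof.
have W_ext : W *m \matrix_(i, b) (f b == i)%:R = colsub f W.
  apply/matrixP => i b; rewrite !mxE (bigD1 (f b)) //= mxE eqxx mulr1.
  by rewrite big1 ?addr0 // => k /negbTE; rewrite mxE eq_sym => ->; rewrite mulr0.
by rewrite mulmxA W_ext !mxE; apply: eq_bigr => b _; rewrite !mxE.
Qed.

End PrincipalSubmatrix.

Lemma Mval_ge_full_column n k m (W : 'M['F_2]_(n + k)) j :
  inA m W -> vdeg W j = k -> (mu n m + uphalf k <= Mval W 0)%N.
Proof.
move=> W_inA degj; set S := [set i | W i j != 0].
have cardS : #|S| = k := degj.
have cardT : #|~: S| = n by have := cardsC S; rewrite card_ord cardS; lia.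
pose f a := enum_val (cast_ord (esym cardT) a).
have f_inj : injective f by move=> a b /enum_val_inj /cast_ord_inj.
have Wf0 a : W (f a) j = 0.
  by have := enum_valP (cast_ord (esym cardT) a); rewrite !inE negbK => /eqP.
have W1 i : i \in S -> W i j = 1 by rewrite inE; case: (F2_cases (W i j)) => ->.
set W' := mxsub f f W.
have [y Mval_y] : {y | Mval W' 0 = hweight (W' *m y + 0)}.
  by apply: eq_bigmax; apply/card_gt0P; exists 0.
pose cc i := (W *m zero_ext f y) i ord0.
have [b cardB] := exists_shift_uphalf S cc.
pose x := zero_ext f y + b *: delta_mx j ord0.
have Wx i : (W *m x + 0) i ord0 = cc i + b * W i j.
  by rewrite addr0 mulmxDr -scalemxAr -colE mxE; congr (_ + _); rewrite !mxE.
set supp := [set i | (W *m x + 0) i ord0 != 0].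
have suppS : [set i in S | cc i + b != 0] \subset supp :&: S.
  apply/subsetP => i; rewrite !inE Wx => /andP[Wij ccb].
  by rewrite W1 ?inE // mulr1 ccb.
have suppT : f @: [set a | (W' *m y + 0) a ord0 != 0] \subset supp :\: S.
  apply/subsetP => i /imsetP[a]; rewrite inE => W'y_a ->.
  by rewrite !inE Wf0 eqxx Wx Wf0 mulr0 addr0 /cc mulmx_zero_ext -[W' *m y]addr0.
have mu_le : (mu n m <= Mval W' 0)%N by apply: bigmin_le; apply: inA_mxsub.
apply: leq_trans (leq_bigmax x); rewrite /hweight -/supp -(cardsID S supp) addnC.
rewrite cardS in cardB; apply: leq_add.
  exact: leq_trans cardB (subset_leq_card suppS).
by apply: leq_trans mu_le _; rewrite Mval_y /hweight -(card_imset _ f_inj) subset_leq_card.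
Qed.

Lemma mu_antimono N m1 m2 : (m1 <= m2)%N -> (mu N m2 <= mu N m1)%N.
Proof.
move=> le_m12; apply: bigmin_sub_le => W /andP[Wwiring Wdeg].
by rewrite /inA Wwiring (leq_trans Wdeg le_m12).
Qed.

Lemma mu_ge_min n m : (0 < m)%N ->
  (minn (mu (n + m) m.-1) (mu n m + uphalf m) <= mu (n + m) m)%N.
Proof.
move=> m_gt0; apply: bigmin_geq => [|W W_inA].
  exact: leq_trans (geq_minl _ _) (bigmin_le_idx _ _ _).
have /andP[Wwiring Wdeg] := W_inA.
have [le_deg | gt_deg] := leqP (wdeg W) m.-1.
  by apply: leq_trans (geq_minl _ _) (bigmin_le _ _ _); rewrite /inA Wwiring le_deg.
have [j degj] : {j | wdeg W = vdeg W j}.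
  by apply: eq_bigmax; rewrite card_ord addn_gt0 m_gt0 orbT.
apply: leq_trans (geq_minr _ _) (Mval_ge_full_column (j := j) W_inA _).
by rewrite -degj; move: Wdeg gt_deg; lia.
Qed.

Theorem lemma5p1 (m n : nat) (hm : (2 <= m)%N) (hn : (1 <= n)%N) :
  mu (n + m) m = mu (n + m) m.-1 \/
  ((mu n m + nu m m <= mu (n + m) m)%N /\ nu m m = uphalf m).
Proof.
have m_gt0 : (0 < m)%N by apply: leq_trans hm.
have := mu_ge_min n m_gt0; have := mu_antimono (n + m) (leq_pred m).
rewrite nu_mm; lia.
Qed.
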